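(* Let $R$ be an algebra with $A$-action and trace, and let $W_k\subseteq A\sim S_k$ be the set of $w$ such that $tr_w$ is a pure trace identity of $R$. Suppose $W_k$ is a two-sided ideal of $A\sim S_k$. Then for every $m\ge k$ and every $u$ in $(A\sim S_m)W_k(A\sim S_m)$, $tr_u$ is a consequence of the identities $\{tr_w:w\in W_k\}$ (obtained from them by substitutions and multiplication by pure trace polynomials), and in particular $tr_u$ is a pure trace identity of $R$.
   Context: $A$ is a semisimple $F$-algebra, $F$ of characteristic zero. An algebra with $A$-action and trace is a unital associative $F$-algebra $R$ with a unital homomorphism $A\to R$ and an $F$-linear map $tr:R\to R$ with central values, $tr(rs)=tr(sr)$ and $tr(tr(r)s)=tr(r)tr(s)$. The wreath product $A\sim S_k$ is spanned by $(a_1\otimes\cdots\otimes a_k)\sigma$ with multiplication $(a_1\otimes\cdots\otimes a_k)\sigma\cdot(b_1\otimes\cdots\otimes b_k)\tau=(a_1b_{\sigma^{-1}(1)}\otimes\cdots\otimes a_kb_{\sigma^{-1}(k)})\sigma\tau$; $A\sim S_k$ is viewed inside $A\sim S_m$ via $(a_1\otimes\cdots\otimes a_k)\sigma\mapsto(a_1\otimes\cdots\otimes a_k\otimes1\otimes\cdots\otimes1)\sigma$, $\sigma$ fixing $k+1,\dots,m$. For $\sigma$ with $\sigma^{-1}=(i_1,\dots,i_a)(j_1,\dots,j_b)\cdots$, $tr_\sigma(x_1,\dots,x_k)=tr(x_{i_1}\cdots x_{i_a})tr(x_{j_1}\cdots x_{j_b})\cdots$; for $w=(a_1\otimes\cdots\otimes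 a_k)\sigma$, $tr_w(x_1,\dots,x_k)=tr_\sigma(x_1a_1,\dots,x_ka_k)$, extended linearly; $tr_w$ is a pure trace identity of $R$ if it vanishes for all $x_i\in R$ (with $a_i$ acting through $A\to R$). *)

From HB Require Import structures.
From mathcomp Require Import all_boot all_order all_algebra all_fingroup.
Set Implicit Arguments. Unset Strict Implicit. Unset Printing Implicit Defensive.
Import GRing.Theory.
Local Open Scope ring_scope.

Section Semisimple.
Context (F : fieldType) (A : algType F).

Definition is_lideal (I : A -> Prop) : Prop :=
  [/\ I 0, (forall x y, I x -> I y -> I (x + y)) & (forall a x, I x -> I (a * x))].

(* A is semisimple: A is a semisimple left module over itself, i.e. every
   left ideal (submodule of the regular module) has a complementary left ideal. *)
Definition semisimple_alg : Prop :=
  forall I, is_lideal I ->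
    exists J, [/\ is_lideal J, (forall x, I x -> J x -> x = 0)
                & (forall a, exists x y, [/\ I x, J y & a = x + y])].
End Semisimple.

Section TraceAlg.
Context (F : fieldType) (A : algType F).

Definition is_trace_alg (R : algType F) (phi : A -> R) (tr : R -> R) : Prop :=
  [/\ (forall a b, phi (a + b) = phi a + phi b),
      (forall (c : F) a, phi (c *: a) = c *: phi a),
      (forall a b, phi (a * b) = phi a * phi b) &
      phi 1 = 1] /\
  [/\ (forall r s, tr (r + s) = tr r + tr s),
      (forall (c : F) r, tr (c *: r) = c *: tr r),
      (forall r s, tr r * s = s * tr r),
      (forall r s, tr (r * s) = tr (s * r)) &
      (forall r s, tr (tr r * s) = tr r * tr s)].

(* Trace polynomials with coefficients from A, in variables x_0, x_1, ... *)
Inductive term : Type :=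
  | TVar of nat
  | TAct of A
  | TAdd of term & term
  | TScale of F & term
  | TMul of term & term
  | TTr of term.

Fixpoint eval (R : algType F) (phi : A -> R) (tr : R -> R) (x : nat -> R)
   (t : term) : R :=
  match t with
  | TVar i => x i
  | TAct a => phi a
  | TAdd t1 t2 => eval phi tr x t1 + eval phi tr x t2
  | TScale c t1 => c *: eval phi tr x t1
  | TMul t1 t2 => eval phi tr x t1 * eval phi tr x t2
  | TTr t1 => tr (eval phi tr x t1)
  end.

Fixpoint subst (s : nat -> term) (t : term) : term :=
  match t with
  | TVar i => s i
  | TAct a => TAct a
  | TAdd t1 t2 => TAdd (subst s t1) (subst s t2)
  | TScale c t1 => TScale c (subst s t1)
  | TMul t1 t2 => TMul (subst s t1) (subst s t2)
  | TTr t1 => TTr (subst s t1)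
  end.

(* pure trace polynomials: polynomials in traces (with scalar coefficients) *)
Inductive pure : term -> Prop :=
  | pure_one : pure (TAct 1)
  | pure_tr t : pure (TTr t)
  | pure_add p q : pure p -> pure q -> pure (TAdd p q)
  | pure_scale c p : pure p -> pure (TScale c p)
  | pure_mul p q : pure p -> pure q -> pure (TMul p q).

(* equality in the free algebra with A-action and trace *)
Definition term_equiv (t1 t2 : term) : Prop :=
  forall (R : algType F) (phi : A -> R) (tr : R -> R),
    is_trace_alg phi tr -> forall x : nat -> R, eval phi tr x t1 = eval phi tr x t2.

Definition is_identity (R : algType F) (phi : A -> R) (tr : R -> R) (t : term) :=
  forall x : nat -> R, eval phi tr x t = 0.

Inductive consequence (G : term -> Prop) : term -> Prop :=
  | cq_gen t : G t -> consequence G t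
  | cq_subst s t : consequence G t -> consequence G (subst s t)
  | cq_add t1 t2 : consequence G t1 -> consequence G t2 -> consequence G (TAdd t1 t2)
  | cq_scale c t : consequence G t -> consequence G (TScale c t)
  | cq_mul p t : pure p -> consequence G t -> consequence G (TMul p t)
  | cq_equiv t t' : consequence G t -> term_equiv t t' -> consequence G t'.

Definition tzero : term := TScale 0 (TAct 1).
Definition tprod (s : seq term) : term := foldr TMul (TAct 1) s.
Definition tsum (s : seq term) : term := foldr TAdd tzero s.

(* A spanning element (a_1 (x) ... (x) a_k) sigma *)
Definition wmon (k : nat) := (k.-tuple A * 'S_k)%type.
(* Elements of A ~ S_k are represented by formal linear combinations of
   spanning elements; tr_w only depends on the represented element. *)
Definition wel (k : nat) := seq (F * wmon k).

(* sigma tau as composition of functions: (sigma tau)(i) = sigma (tau i) *)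
Definition pcomp k (s t : 'S_k) : 'S_k := (t * s)%g.

Definition wmon_mul k (x y : wmon k) : wmon k :=
  let: (a, s) := x in let: (b, t) := y in
  ([tuple tnth a i * tnth b ((s^-1)%g i) | i < k], pcomp s t).

Definition wel_mul k (v w : wel k) : wel k :=
  [seq (c.1 * d.1, wmon_mul c.2 d.2) | c <- v, d <- w].

Definition ext_fun k n (s : 'S_k) (i : 'I_(k + n)) : 'I_(k + n) :=
  match split i with inl j => lshift n (s j) | inr j => rshift k j end.

Lemma ext_fun_inj k n (s : 'S_k) : injective (@ext_fun k n s).
Proof.
move=> i j H; rewrite -(splitK i) -(splitK j); move: H; rewrite /ext_fun.
case: (split i) => [i'|i']; case: (split j) => [j'|j'] /= H.
- by have /perm_inj -> : s i' = s j' by apply: val_inj; move/(congr1 val): H.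
- by move/(congr1 val): H => /= H; have := ltn_ord (s i'); rewrite H ltnNge leq_addr.
- by move/(congr1 val): H => /= H; have := ltn_ord (s j'); rewrite -H ltnNge leq_addr.
- by move/(congr1 val)/eqP: H => /=; rewrite eqn_add2l => /eqP H; have -> : i' = j' by apply: val_inj.
Qed.

Definition ext_perm k n (s : 'S_k) : 'S_(k + n) := perm (@ext_fun_inj k n s).

Definition wmon_emb k n (x : wmon k) : wmon (k + n) :=
  let: (a, s) := x in ([tuple of cat a (nseq n (1 : A))], ext_perm n s).

Definition wel_emb k n (w : wel k) : wel (k + n) :=
  [seq (c.1, wmon_emb n c.2) | c <- w].

(* the trace of the cycle of sigma^{-1} through i, evaluated at
   (x_1 a_1, ..., x_k a_k):  tr(x_i a_i x_{s' i} a_{s' i} ...), s' = sigma^{-1} *)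
Definition cycle_term k (a : k.-tuple A) (s : 'S_k) (C : {set 'I_k}) : term :=
  match [pick i in C] with
  | Some i => TTr (tprod [seq (let j := (((s^-1) ^+ e)%g i) in
                               TMul (TVar j) (TAct (tnth a j))) | e <- iota 0 #|C|])
  | None => TAct 1
  end.

Definition trmon k (x : wmon k) : term :=
  let: (a, s) := x in tprod [seq cycle_term a s C | C <- enum (porbits (s^-1)%g)].

Definition trw k (w : wel k) : term := tsum [seq TScale c.1 (trmon c.2) | c <- w].

End TraceAlg.

(* A trace monomial tr_w is a product, over the cycles of a permutation, of traces
   of the words x_i a_i read along each cycle; cyclicity of tr lets one rotate and
   relabel these words freely.  For g, h in A ~ S_m and w in A ~ S_k, the cycles of
   g w h can thus be rewritten so that the coefficients of w sit at the positions
   1..k, and the positions k+1..m are then removed one at a time: a position fixed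
   by the permutation contributes a pure trace factor tr(z), while any other one is
   cut out of its cycle and its letter is absorbed into the next letter.  What
   remains is tr_{w theta}, evaluated at substituted variables, times a pure trace
   polynomial, where theta in S_k and the substitution depend on g and h only.
   Since W_k is an ideal, w theta is in W_k, so tr_{g w h} is a consequence. *)

From HB Require Import structures.
From mathcomp Require Import all_boot all_order all_algebra all_fingroup.
Local Open Scope ring_scope.

Set Implicit Arguments. Unset Strict Implicit. Unset Printing Implicit Defensive.
Import GRing.Theory.

Lemma perm_big_central (R : pzRingType) (I : eqType) (r1 r2 : seq I)
    (P : pred I) (G : I -> R) :
  (forall i y, G i * y = y * G i) -> perm_eq r1 r2 ->
  \prod_(i <- r1 | P i) G i = \prod_(i <- r2 | P i) G i.
Proof.
move=> GC /(perm_filter P); rewrite -big_filter -[RHS]big_filter.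
elim: (filter P r1) (filter P r2) => [|x r1' IH] r2' r12.
  by move: r12; rewrite perm_sym => /perm_nilP ->.
have xr2 : x \in r2' by rewrite -(perm_mem r12) mem_head.
case/splitPr: xr2 r12 => r2a r2b r12; have {}r12 : perm_eq r1' (r2a ++ r2b).
  by rewrite -(perm_cons x); apply: perm_trans r12 _; rewrite -cat1s perm_catCA.
by rewrite big_cons (IH _ r12) !big_cat big_cons /= mulrA GC -mulrA.
Qed.

Lemma perm_enum_setD1 (U : finType) (A : {set U}) C :
  C \in A -> perm_eq (enum A) (C :: enum (A :\ C)).
Proof.
move=> CA; apply: uniq_perm; rewrite /= ?enum_uniq ?mem_enum ?setD11 //.
by move=> Y; rewrite in_cons !mem_enum in_setD1; case: eqP => // ->.
Qed.

Lemma subsetU1_notin (T : finType) (Y D : {set T}) l :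
  l \notin Y -> (Y \subset l |: D) = (Y \subset D).
Proof.
move=> lY; apply/subsetP/subsetP => YD y yY; last by rewrite setU1r ?YD.
by case/setU1P: (YD y yY) => // yl; rewrite -yl yY in lY.
Qed.

Section Orbits.
Local Open Scope nat_scope.

Lemma eq_traject (U : Type) (f g : U -> U) u n :
  (forall e, e < n -> iter e f u = iter e g u) -> traject f u n = traject g u n.
Proof.
elim: n => // n IH fg; rewrite !trajectSr fg // IH // => e lten.
by apply: fg; apply: ltnW.
Qed.

Lemma traject_uniq_iter_inj (U : eqType) (f : U -> U) u n i j :
  uniq (traject f u n) -> i < n -> j < n -> iter i f u = iter j f u -> i = j.
Proof.
by move=> Uf ltin ltjn E; apply/eqP; rewrite -(nth_uniq u _ _ Uf) ?size_traject
   ?nth_traject // E.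
Qed.

Variable T : finType.
Implicit Types (s : {perm T}) (x y : T).

Lemma traject_permX s x n : traject s x n = [seq (s ^+ i)%g x | i <- iota 0 n].
Proof. by elim: n => // n IH; rewrite trajectSr IH -addn1 iotaD map_cat /= permX cats1. Qed.

Lemma card_porbit_iter s x d :
  0 < d -> iter d s x = x -> uniq (traject s x d) -> #|porbit s x| = d.
Proof.
move=> d_gt0 sdx Ud; have c_gt0 : 0 < #|porbit s x| by rewrite lt0n card_porbit_neq0.
case: (ltngtP #|porbit s x| d) => [lt_cd | lt_dc | //].
  by move: c_gt0; rewrite (traject_uniq_iter_inj (j := 0) Ud lt_cd) ?iter_porbit.
by move: d_gt0; rewrite (traject_uniq_iter_inj (j := 0) (uniq_traject_porbit s x) lt_dc).
Qed.

Lemma porbit_succ s x : porbit s (s x) = porbit s x.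
Proof. by have := porbit_perm s 1 x; rewrite expg1. Qed.

Lemma mem_porbit_succ s x : s x \in porbit s x.
Proof. by have := mem_porbit s 1 x; rewrite expg1. Qed.

Lemma porbit_closedX s x y i : ((s ^+ i)%g y \in porbit s x) = (y \in porbit s x).
Proof. by rewrite porbit_sym porbit_perm porbit_sym. Qed.

Lemma porbit_fix s x : s x = x -> porbit s x = [set x].
Proof.
move=> sx; apply/setP => y; rewrite inE; apply/porbitP/eqP => [[i ->]|->].
  exact: permX_fix.
by exists 0; rewrite expg0 perm1.
Qed.

Lemma porbits_setD1_notin s x y Y :
  Y \in porbits s :\ porbit s x -> y \in porbit s x -> y \notin Y.
Proof.
rewrite !inE => /andP[YC /imsetP[z _ YE]] yx; subst Y; apply: contra YC => yz.
have E1 : porbit s y = porbit s z by apply/eqP; rewrite eq_porbit_mem.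
have E2 : porbit s y = porbit s x by apply/eqP; rewrite eq_porbit_mem.
by rewrite -E1 E2.
Qed.

End Orbits.

(* [skip_perm s l] bypasses [l]: it sends the preimage of [l] to [s l] and fixes [l]. *)
Definition skip_perm (T : finType) (s : {perm T}) l : {perm T} := (s * tperm l (s l))%g.

Section SkipPerm.
Variables (T : finType) (s : {perm T}) (l : T).
Hypothesis sl : s l != l.
Local Notation q := (s l).
Local Notation C := (porbit s l).
Local Notation sk := (skip_perm s l).
Local Open Scope nat_scope.

Lemma skip_permE y : sk y = tperm l q (s y).
Proof. exact: permM. Qed.

Lemma skip_perm_id : sk l = l.
Proof. by rewrite skip_permE tpermR. Qed.

Lemma skip_perm_out z : z \notin C -> sk z = s z.
Proof.
move=> zC; have szC : s z \notin C by move: zC; rewrite -(porbit_closedX _ _ _ 1) expg1.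
rewrite skip_permE tpermD //; apply: contraNneq szC => <-.
  exact: porbit_id.
exact: mem_porbit_succ.
Qed.

Lemma skip_permX_out y e : y \notin C -> (sk ^+ e)%g y = (s ^+ e)%g y.
Proof.
move=> yC; rewrite !permX; elim: e => //= e ->.
by rewrite skip_perm_out // -permX porbit_closedX.
Qed.

Lemma porbit_skip_perm_out y : y \notin C -> porbit sk y = porbit s y.
Proof.
move=> yC; apply/setP => z.
by apply/porbitP/porbitP => -[e ->]; exists e; rewrite skip_permX_out.
Qed.

Section LongCycle.
Variable M : nat.
Hypothesis cardC : #|C| = M.+2.

Lemma uniq_traject_succ : l \notin traject s q M.+1 /\ uniq (traject s q M.+1).
Proof. by apply/andP; rewrite -cons_uniq -trajectS -cardC uniq_traject_porbit. Qed.

Lemma iter_succ_period : iter M.+1 s q = l.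
Proof. by rewrite -iterSr -cardC iter_porbit. Qed.

Lemma iter_skip_perm e : e <= M.+1 -> iter e sk q = if e == M.+1 then q else iter e s q.
Proof.
have [lt Uq] := uniq_traject_succ.
elim: e => [//|e IH] lt_eM1; rewrite iterS (IH (ltnW lt_eM1)) (ltn_eqF lt_eM1) /=.
rewrite skip_permE -iterS.
have [eM|neM] := eqVneq e.+1 M.+1; first by rewrite eM iter_succ_period tpermL.
have lt_eM : e.+1 < M.+1 by rewrite ltn_neqAle neM.
rewrite tpermD //.
  by apply: contraNneq lt => E; apply/trajectP; exists e.+1.
by apply/eqP => /(traject_uniq_iter_inj (i := 0) Uq isT lt_eM).
Qed.

Lemma traject_skip_perm : traject sk q M.+1 = traject s q M.+1.
Proof.
by apply: eq_traject => e lt_eM; rewrite iter_skip_perm ?(ltnW lt_eM) ?(ltn_eqF lt_eM).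
Qed.

Lemma card_porbit_skip_perm : #|porbit sk q| = M.+1.
Proof.
have [_ Uq] := uniq_traject_succ.
apply: card_porbit_iter => //; first by rewrite iter_skip_perm ?eqxx.
by rewrite traject_skip_perm.
Qed.

Lemma porbit_skip_perm : porbit sk q = C :\ l.
Proof.
have [lt _] := uniq_traject_succ.
apply/setP => y; rewrite porbit_traject card_porbit_skip_perm traject_skip_perm.
rewrite in_setD1 porbit_traject cardC [traject s l _]trajectS.
have [->|ne] := eqVneq y l; first by rewrite (negbTE lt).
by rewrite [in RHS]in_cons (negbTE ne).
Qed.

End LongCycle.

Lemma traject_skip_perm_out y n : y \notin C -> traject sk y n = traject s y n.
Proof. by move=> yC; apply: eq_traject => e _; rewrite -!permX skip_permX_out. Qed.

Lemma card_porbit_gt1 : 1 < #|C|.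
Proof. by apply/card_gt1P; exists l, q; rewrite porbit_id mem_porbit_succ eq_sym sl. Qed.

Lemma porbits_skip_perm :
  perm_eq (enum (porbits sk)) (C :\ l :: [set l] :: enum (porbits s :\ C)).
Proof.
have [M cardC] : exists M, #|C| = M.+2.
  by move: card_porbit_gt1; case: #|C| => [|[|M]] //; exists M.
have qCl : q \in C :\ l by rewrite in_setD1 sl mem_porbit_succ.
apply: uniq_perm; rewrite /= ?enum_uniq ?in_cons ?mem_enum //.
  rewrite andbT; apply/andP; split.
    apply/norP; split; first by apply/eqP => Cl; move: qCl; rewrite Cl inE (negbTE sl).
    by apply/negP => /porbits_setD1_notin/(_ (mem_porbit_succ s l)); rewrite qCl.
  by apply/negP => /porbits_setD1_notin/(_ (porbit_id s l)); rewrite set11.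
move=> Y; rewrite mem_enum !in_cons mem_enum; apply/imsetP/idP => [[y _ ->]|].
  have [yl|yl] := eqVneq y l; first by rewrite yl porbit_fix ?skip_perm_id ?eqxx ?orbT.
  case/boolP: (y \in C) => yC.
    have : y \in porbit sk q by rewrite (porbit_skip_perm cardC) in_setD1 yl.
    by rewrite -eq_porbit_mem (porbit_skip_perm cardC) => ->.
  rewrite porbit_skip_perm_out // in_setD1 imset_f // andbT.
  by rewrite eq_porbit_mem yC !orbT.
case/or3P => [/eqP->|/eqP->|]; first by exists q; rewrite ?(porbit_skip_perm cardC).
  by exists l; rewrite ?porbit_fix ?skip_perm_id.
rewrite in_setD1 => /andP[YC /imsetP[y _ YE]]; exists y => //.
rewrite YE porbit_skip_perm_out //; apply: contra YC => yC.
by rewrite YE eq_porbit_mem.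
Qed.

End SkipPerm.

Section CycleTraces.
Variables (R : pzRingType) (tr : R -> R).
Hypothesis trC : forall r r', tr (r * r') = tr (r' * r).
Hypothesis tr_central : forall r r', tr r * r' = r' * tr r.

Section OneType.
Variable T : finType.
Implicit Types (s : {perm T}) (f g h : T -> R) (D : {set T}).

Definition cycle_word f s x := \prod_(y <- traject s x #|porbit s x|) f y.

Definition cycle_tr f s (C : {set T}) :=
  if [pick x in C] is Some x then tr (cycle_word f s x) else 1.

(* The cycles inside D are omitted; cycle traces are central, so the order
   of the factors is irrelevant. *)
Definition cycles_tr D f s :=
  \prod_(C <- enum (porbits s) | ~~ (C \subset D)) cycle_tr f s C.

Lemma tr_cycle_word_succ f s x : tr (cycle_word f s (s x)) = tr (cycle_word f s x).
Proof.
rewrite /cycle_word porbit_succ.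
case: #|porbit s x| (iter_porbit s x) => [//|c] scx.
by rewrite trajectSr -iterSr scx trajectS -cats1 big_cat big_seq1 big_cons trC.
Qed.

Lemma tr_cycle_word_porbit f s x y :
  y \in porbit s x -> tr (cycle_word f s y) = tr (cycle_word f s x).
Proof.
case/porbitP=> i ->; elim: i => [|i IH]; first by rewrite expg0 perm1.
by rewrite expgSr permM tr_cycle_word_succ.
Qed.

Lemma cycle_tr_porbit f s x : cycle_tr f s (porbit s x) = tr (cycle_word f s x).
Proof.
rewrite /cycle_tr; case: pickP => [y|/(_ x)]; last by rewrite porbit_id.
exact: tr_cycle_word_porbit.
Qed.

Lemma cycle_tr_central f s C r : cycle_tr f s C * r = r * cycle_tr f s C.
Proof. by rewrite /cycle_tr; case: pickP => [x _|_]; rewrite ?tr_central ?mul1r ?mulr1. Qed.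

Lemma eq_cycles_tr D f g s : f =1 g -> cycles_tr D f s = cycles_tr D g s.
Proof.
move=> fg; apply: eq_bigr => C _; rewrite /cycle_tr; case: pickP => // x _.
by congr tr; apply: eq_bigr => y _.
Qed.

Lemma prod_traject_rotate g h s x n :
  g x * \prod_(y <- traject s x n) (h y * g (s y)) =
  \prod_(y <- traject s x n) (g y * h y) * g (iter n s x).
Proof.
elim: n x => [|n IH] x; first by rewrite !big_nil mulr1 mul1r.
by rewrite trajectS !big_cons iterSr -[RHS]mulrA -IH !mulrA.
Qed.

Lemma cycles_tr_rotate D g h s :
  cycles_tr D (fun y => g y * h y) s = cycles_tr D (fun y => h y * g (s y)) s.
Proof.
rewrite /cycles_tr big_seq_cond [RHS]big_seq_cond; apply: eq_bigr => C /andP[].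
rewrite mem_enum => /imsetP[x _ ->] _; rewrite !cycle_tr_porbit /cycle_word.
case: #|porbit s x| (iter_porbit s x) => [|c] scx; first by rewrite !big_nil.
rewrite !trajectS !big_cons -[in RHS]mulrA (prod_traject_rotate g) -iterSr scx.
by rewrite mulrA [RHS]trC !mulrA.
Qed.

Lemma cycles_tr0 f s : cycles_tr set0 f s = \prod_(C <- enum (porbits s)) cycle_tr f s C.
Proof.
rewrite /cycles_tr big_seq_cond [RHS]big_seq; apply: eq_bigl => C.
rewrite mem_enum; case sC: (C \in porbits s); rewrite ?andbF //.
case/imsetP: sC => x _ ->.
by apply/negP => /subsetP/(_ x (porbit_id s x)); rewrite inE.
Qed.

Lemma cycles_tr_split D f s C : C \in porbits s ->
  cycles_tr D f s = (if C \subset D then 1 else cycle_tr f s C) *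
    \prod_(Y <- enum (porbits s :\ C) | ~~ (Y \subset D)) cycle_tr f s Y.
Proof.
move=> sC; rewrite /cycles_tr (perm_big_central _ (cycle_tr_central f s) (perm_enum_setD1 sC)).
by rewrite big_cons; case: (C \subset D); rewrite ?mul1r.
Qed.

Lemma prod_porbits_setD1_subsetU1 D s l (G : {set T} -> R) :
  \prod_(Y <- enum (porbits s :\ porbit s l) | ~~ (Y \subset l |: D)) G Y =
  \prod_(Y <- enum (porbits s :\ porbit s l) | ~~ (Y \subset D)) G Y.
Proof.
rewrite big_seq_cond [RHS]big_seq_cond; apply: eq_bigl => Y.
rewrite mem_enum; case YsC: (_ \in _) => //=.
by rewrite subsetU1_notin // (porbits_setD1_notin YsC (porbit_id s l)).
Qed.

Lemma cycles_tr_fix D f s l : s l = l -> l \notin D ->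
  cycles_tr D f s = tr (f l) * cycles_tr (l |: D) f s.
Proof.
move=> sl lD; have sC : porbit s l \in porbits s by apply: imset_f.
rewrite (cycles_tr_split D f sC) (cycles_tr_split (l |: D) f sC) prod_porbits_setD1_subsetU1.
rewrite cycle_tr_porbit /cycle_word (porbit_fix sl) !sub1set setU11 (negbTE lD).
by rewrite cards1 /= big_seq1 mul1r.
Qed.

Lemma cycle_word_skip_perm f s l M : #|porbit s l| = M.+2 ->
  cycle_word (fun y => if y == s l then f l * f y else f y) (skip_perm s l) (s l) =
  cycle_word f s l.
Proof.
move=> cardC; have [_] := uniq_traject_succ cardC; rewrite trajectS cons_uniq.
case/andP=> qt _; rewrite /cycle_word (card_porbit_skip_perm cardC) (traject_skip_perm cardC).
rewrite cardC [traject s l _]trajectS !trajectS !big_cons eqxx -mulrA; congr (_ * (_ * _)).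
apply: eq_big_seq => y yt; rewrite ifN //.
by apply: contraNneq qt => yE; rewrite -[X in X \in _]yE.
Qed.

Lemma cycle_tr_skip_perm_out f s l Y : Y \in porbits s :\ porbit s l ->
  cycle_tr (fun y => if y == s l then f l * f y else f y) (skip_perm s l) Y =
  cycle_tr f s Y.
Proof.
move=> YsC; have := YsC; rewrite in_setD1 => /andP[YC /imsetP[y _ YE]]; subst Y.
have yC : y \notin porbit s l by rewrite -eq_porbit_mem.
rewrite -{1}(porbit_skip_perm_out yC) !cycle_tr_porbit /cycle_word.
rewrite porbit_skip_perm_out // traject_skip_perm_out //; congr tr.
apply: eq_big_seq => z; rewrite -porbit_traject => zy; rewrite ifN //.
by apply/eqP => zq; move: (porbits_setD1_notin YsC (mem_porbit_succ s l)); rewrite -zq zy.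
Qed.

Lemma cycles_tr_skip D f s l : s l != l -> l \notin D -> {in D, forall d, s d = d} ->
  cycles_tr D f s =
  cycles_tr (l |: D) (fun y => if y == s l then f l * f y else f y) (skip_perm s l).
Proof.
move=> sl lD sD; have [M cardC] : exists M, #|porbit s l| = M.+2.
  by move: (card_porbit_gt1 sl); case: #|_| => [|[|M]] //; exists M.
have sC : porbit s l \in porbits s by apply: imset_f.
have lC : (porbit s l \subset D) = false.
  by apply: contraNF lD => /subsetP; apply; apply: porbit_id.
have qC : ~~ (porbit s l :\ l \subset l |: D).
  apply/subsetPn; exists (s l); rewrite ?in_setD1 ?sl ?mem_porbit_succ //.
  by rewrite in_setU1 negb_or sl; apply/negP => /sD/perm_inj sq; rewrite sq eqxx in sl.
rewrite (cycles_tr_split D f sC) lC /cycles_tr.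
rewrite (perm_big_central _ (cycle_tr_central _ _) (porbits_skip_perm sl)) !big_cons.
rewrite qC sub1set setU11 /= prod_porbits_setD1_subsetU1.
rewrite -(porbit_skip_perm cardC) !cycle_tr_porbit (cycle_word_skip_perm _ cardC).
congr (_ * _); rewrite big_seq_cond [RHS]big_seq_cond; apply: eq_bigr => Y.
by rewrite mem_enum andbC => /andP[_ /cycle_tr_skip_perm_out ->].
Qed.

End OneType.

Lemma cycles_tr_relabel (T1 T2 : finType) (h : T1 -> T2) (s1 : {perm T1})
    (s2 : {perm T2}) (D : {set T2}) (f : T2 -> R) :
  injective h -> (forall x, s2 (h x) = h (s1 x)) ->
  (forall y, (y \in D) = (y \notin codom h)) ->
  cycles_tr D f s2 = cycles_tr set0 (f \o h) s1.
Proof.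
move=> h_inj hs Dh.
have hsX e x : (s2 ^+ e)%g (h x) = h ((s1 ^+ e)%g x).
  by rewrite !permX; elim: e => //= e ->; rewrite hs.
have porbit_h x : porbit s2 (h x) = h @: porbit s1 x.
  apply/setP => y; apply/porbitP/imsetP => [[e ->]|[z /porbitP[e ->] ->]].
    by exists ((s1 ^+ e)%g x); rewrite ?hsX ?mem_porbit.
  by exists e; rewrite hsX.
have traject_h x n : traject s2 (h x) n = map h (traject s1 x n).
  by elim: n x => //= n IH x; rewrite hs IH.
rewrite cycles_tr0 /cycles_tr -big_filter.
rewrite (eq_big_seq (fun C : {set T1} => cycle_tr f s2 (h @: C))); last first.
  move=> C; rewrite mem_enum => /imsetP[x _ ->]; rewrite -porbit_h !cycle_tr_porbit.
  by rewrite /cycle_word porbit_h card_imset // traject_h big_map.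
rewrite -(big_map (fun C : {set T1} => h @: C) predT).
apply: perm_big_central (cycle_tr_central f s2) _.
apply: uniq_perm; first exact/filter_uniq/enum_uniq.
  by rewrite map_inj_uniq ?enum_uniq //; exact: imset_inj.
move=> Y; rewrite mem_filter mem_enum; apply/andP/mapP.
  case=> /subsetPn[z zY zD] /imsetP[y _ YE].
  have /codomP[x zx] : z \in codom h by move: zD; rewrite Dh negbK.
  exists (porbit s1 x); first by rewrite mem_enum imset_f.
  by rewrite -porbit_h -zx YE; apply/eqP; rewrite eq_sym eq_porbit_mem -YE.
case=> C; rewrite mem_enum => /imsetP[x _ ->] ->; rewrite -porbit_h imset_f //.
split=> //; apply/subsetPn; exists (h x); rewrite ?porbit_id // Dh negbK.
exact: codom_f.
Qed.

Lemma cycles_tr_conj (T : finType) f (s : {perm T}) :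
  cycles_tr set0 f s = cycles_tr set0 (fun t => f ((s^-1)%g t)) s.
Proof.
apply: (cycles_tr_relabel _ (h := (s^-1)%g)).
- exact: perm_inj.
- by move=> t; rewrite permKV permK.
by move=> y; rewrite inE; apply/esym/negbF/codomP; exists (s y); rewrite permK.
Qed.

End CycleTraces.

Section Semantics.
Variables (F : fieldType) (A : algType F) (R : algType F).
Variables (phi : A -> R) (tr : R -> R).
Hypothesis HR : is_trace_alg phi tr.

Lemma trace_alg_trC r r' : tr (r * r') = tr (r' * r). Proof. by case: HR => _ []. Qed.
Lemma trace_alg_central r r' : tr r * r' = r' * tr r. Proof. by case: HR => _ []. Qed.
Lemma trace_alg_phi1 : phi 1 = 1. Proof. by case: HR => -[]. Qed.
Lemma trace_alg_phiM a b : phi (a * b) = phi a * phi b. Proof. by case: HR => -[]. Qed.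

Lemma eval_tprod x (ts : seq (term A)) :
  eval phi tr x (tprod ts) = \prod_(t <- ts) eval phi tr x t.
Proof.
by elim: ts => [|t ts IH]; rewrite ?big_nil ?big_cons /= ?trace_alg_phi1 // IH.
Qed.

Lemma eval_tsum x (ts : seq (term A)) :
  eval phi tr x (tsum ts) = \sum_(t <- ts) eval phi tr x t.
Proof. by elim: ts => [|t ts IH]; rewrite ?big_nil ?big_cons /= ?scale0r // IH. Qed.

Lemma eval_subst x sb (t : term A) :
  eval phi tr x (subst sb t) = eval phi tr (fun i => eval phi tr x (sb i)) t.
Proof. by elim: t => //= [t1 -> t2 ->|c t ->|t1 -> t2 ->|t ->]. Qed.

Lemma eval_trmon x k (a : k.-tuple A) (s : 'S_k) :
  eval phi tr x (trmon (a, s)) =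
  cycles_tr tr set0 (fun j => x (val j) * phi (tnth a j)) (s^-1)%g.
Proof.
rewrite /trmon eval_tprod big_map cycles_tr0 big_seq [RHS]big_seq.
apply: eq_bigr => C; rewrite mem_enum => /imsetP[y _ ->].
rewrite /cycle_term /cycle_tr; case: pickP => [i|]; last by rewrite /= trace_alg_phi1.
rewrite -eq_porbit_mem => /eqP <- /=.
by rewrite eval_tprod /cycle_word traject_permX !big_map.
Qed.

Definition eval_wel x k (w : wel A k) :=
  \sum_(c <- w) c.1 *: eval phi tr x (trmon c.2).

Lemma eval_trw x k (w : wel A k) : eval phi tr x (trw w) = eval_wel x w.
Proof. by rewrite /trw eval_tsum big_map. Qed.

Lemma eval_wel_mul x k (v w : wel A k) :
  eval_wel x (wel_mul v w) =
  \sum_(c <- v) \sum_(d <- w) (c.1 * d.1) *: eval phi tr x (trmon (wmon_mul c.2 d.2)).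
Proof. by rewrite /eval_wel /wel_mul big_allpairs_dep. Qed.

End Semantics.

Section Extension.
Variables (k n : nat).
Implicit Types (p : 'S_k) (i : 'I_(k + n)).
Local Open Scope nat_scope.

Lemma ext_perm_lshift p j : ext_perm n p (lshift n j) = lshift n (p j).
Proof. by rewrite /ext_perm permE /ext_fun (unsplitK (inl _ j)). Qed.

Lemma ext_permV_lshift p j : ((ext_perm n p)^-1)%g (lshift n j) = lshift n ((p^-1)%g j).
Proof. by rewrite -{1}(permKV p j) -ext_perm_lshift permK. Qed.

Definition extras : {set 'I_(k + n)} := [set i : 'I_(k + n) | k <= i].

Lemma extrasE i : (i \in extras) = (i \notin codom (lshift n)).
Proof.
rewrite inE; apply/idP/idP => [le_ki|].
  by apply/codomP => -[j ij]; move: le_ki; rewrite ij /= leqNgt ltn_ord.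
case: (splitP i) => [j ij|j ->]; last by rewrite leq_addr.
by case/codomP; exists j; apply: val_inj.
Qed.

Lemma ext_perm_extras p i : i \in extras -> ext_perm n p i = i.
Proof.
rewrite inE /ext_perm permE /ext_fun; case: splitP => [j ij|j ij] le_ki.
  by move: le_ki; rewrite ij leqNgt ltn_ord.
by apply: val_inj; rewrite /= ij.
Qed.

Lemma ext_permV_extras p i : i \in extras -> ((ext_perm n p)^-1)%g i = i.
Proof. by move=> iX; rewrite -{1}(ext_perm_extras p iX) permK. Qed.

Lemma tnth_cat_ones_extras (T : nzRingType) (a : k.-tuple T) i :
  i \in extras -> tnth [tuple of a ++ nseq n (1%R : T)] i = 1%R.
Proof.
rewrite extrasE -(splitK i); case: (split i) => j /=; first by rewrite codom_f.
by rewrite (tnth_rshift a [tuple of nseq n (1%R : T)]) tnth_nseq.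
Qed.

End Extension.

Section Contraction.
Variables (F : fieldType) (A : algType F) (k n : nat).
Local Notation m := (k + n).
Local Notation X := (extras k n).
Local Notation emb a := [tuple of a ++ nseq n (1%R : A)].
Implicit Types (D : {set 'I_m}) (tau : 'S_m) (z : 'I_m -> term A).

(* The cycles of [(ext_perm n pi)^-1 * tau] inside [D] are discarded; the
   contracted monomial on 'I_k must not depend on [a] or [pi]. *)
Definition contractible D tau z :=
  exists p (theta : 'S_k) (z' : 'I_k -> term A), pure p /\
  forall (R : algType F) (phi : A -> R) (tr : R -> R), is_trace_alg phi tr ->
  forall x (a : k.-tuple A) (pi : 'S_k),
  cycles_tr tr D (fun i => eval phi tr x (z i) * phi (tnth (emb a) i))
    ((ext_perm n pi)^-1 * tau)%g =
  eval phi tr x p *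
  cycles_tr tr set0 (fun j => eval phi tr x (z' j) * phi (tnth a j)) (pi^-1 * theta)%g.

Lemma contractible_extras tau z : {in X, forall i, tau i = i} -> contractible X tau z.
Proof.
move=> tauX; have tau_lshift j : tau (lshift n j) \in codom (lshift n).
  rewrite -[_ \in _]negbK -extrasE; apply/negP => /[dup] /tauX/perm_inj ->.
  by rewrite extrasE codom_f.
pose th j := iinv (tau_lshift j).
have thE j : tau (lshift n j) = lshift n (th j) by rewrite f_iinv.
have th_inj : injective th.
  by move=> j1 j2 eq_j; apply: (@lshift_inj k n); apply: (@perm_inj _ tau); rewrite !thE eq_j.
exists (TAct 1), (perm th_inj), (fun j => z (lshift n j)); split; first exact: pure_one.
move=> R phi tr HR x a pi.
rewrite /= (trace_alg_phi1 HR) mul1r.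
rewrite (cycles_tr_relabel (trace_alg_trC HR) (trace_alg_central HR) _ (h := lshift n)
  (s1 := (pi^-1 * perm th_inj)%g)).
- by apply: eq_cycles_tr => j /=; rewrite tnth_lshift.
- exact: lshift_inj.
- by move=> j; rewrite !permM ext_permV_lshift thE permE.
- exact: extrasE.
Qed.

Lemma contractible_fix D tau z l : l \in X -> l \notin D -> tau l = l ->
  contractible (l |: D) tau z -> contractible D tau z.
Proof.
move=> lX lD taul [p [th [z' [pp Hp]]]].
exists (TMul (TTr (z l)) p), th, z'; split; first exact/pure_mul/pp/pure_tr.
move=> R phi tr HR x a pi.
rewrite (cycles_tr_fix (trace_alg_trC HR) (trace_alg_central HR) _ (l := l)) //.
  by rewrite Hp //= tnth_cat_ones_extras // (trace_alg_phi1 HR) mulr1 mulrA.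
by rewrite permM ext_permV_extras.
Qed.

Lemma contractible_skip D tau z l :
  D \subset X -> l \in X -> l \notin D -> tau l != l -> {in D, forall d, tau d = d} ->
  contractible (l |: D) (skip_perm tau l)
    (fun j => if j == tau l then TMul (z l) (z j) else z j) ->
  contractible D tau z.
Proof.
move=> DX lX lD taul tauD [p [th [z' [pp Hp]]]]; exists p, th, z'; split=> //.
move=> R phi tr HR x a pi; rewrite -Hp //.
have Pl : ((ext_perm n pi)^-1 * tau)%g l = tau l by rewrite permM ext_permV_extras.
rewrite (cycles_tr_skip (trace_alg_trC HR) (trace_alg_central HR) _ (l := l)) ?Pl //.
  rewrite /skip_perm Pl -mulgA; apply: eq_cycles_tr => j /=.
  by case: eqP => //= _; rewrite tnth_cat_ones_extras // (trace_alg_phi1 HR) mulr1 mulrA.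
by move=> d dD; rewrite permM ext_permV_extras ?tauD // (subsetP DX).
Qed.

Lemma contractible_subset_extras D tau z :
  D \subset X -> {in D, forall d, tau d = d} -> contractible D tau z.
Proof.
move: {2}#|X :\: D| (erefl #|X :\: D|) => N.
elim: N D tau z => [|N IH] D tau z NXD DX tauD.
  have DE : D = X by apply/eqP; rewrite eqEsubset DX -setD_eq0 -cards_eq0 NXD.
  by rewrite DE in tauD *; apply: contractible_extras.
have [l] : exists l, l \in X :\: D by apply/set0Pn; rewrite -card_gt0 NXD.
rewrite inE => /andP[lD lX]; have lXD : l \in X :\: D by rewrite inE lD.
have lDX : l |: D \subset X by rewrite subUset sub1set lX.
have NlXD : #|X :\: (l |: D)| = N.
  move: NXD; rewrite (cardsD1 l) lXD add1n => -[<-]; apply: eq_card => y.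
  by rewrite !inE negb_or andbA.
have [taul|taul] := eqVneq (tau l) l.
  apply: (contractible_fix lX lD taul); apply: IH => // d.
  by case/setU1P => [->|/tauD].
apply: (contractible_skip DX lX lD taul tauD); apply: IH => // d.
case/setU1P => [->|dD]; first exact: skip_perm_id.
rewrite skip_permE (tauD d dD) tpermD //; first by apply: contraNneq lD => ->.
by apply: contraNneq taul => tauld; apply/eqP/(@perm_inj _ tau); rewrite tauld tauD.
Qed.

End Contraction.

Definition wperm (F : fieldType) (A : algType F) k (theta : 'S_k) : wmon A k :=
  ([tuple 1 | _ < k], theta).

Section Sandwich.
Variables (F : fieldType) (A : algType F) (k n : nat).
Local Notation m := (k + n).
Local Notation emb a := [tuple of a ++ nseq n (1%R : A)].

Definition sandwich_perm (g h : wmon A m) : 'S_m := (h.2^-1 * g.2^-1)%g.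

Definition sandwich_var (g h : wmon A m) (i : 'I_m) : term A :=
  TMul (TAct (tnth h.1 (h.2 (g.2 i)))) (TMul (TVar A (g.2 i)) (TAct (tnth g.1 (g.2 i)))).

Lemma eval_trmon_sandwich (g h : wmon A m) (R : algType F) (phi : A -> R) (tr : R -> R) :
  is_trace_alg phi tr -> forall x (a : k.-tuple A) (pi : 'S_k),
  eval phi tr x (trmon (wmon_mul (wmon_mul g (wmon_emb n (a, pi))) h)) =
  cycles_tr tr set0 (fun i => eval phi tr x (sandwich_var g h i) * phi (tnth (emb a) i))
    ((ext_perm n pi)^-1 * sandwich_perm g h)%g.
Proof.
case: g h => b be [c ga] HR x a pi.
have [trC trZ] := (trace_alg_trC HR, trace_alg_central HR).
set Pi := ext_perm n pi; set s := (Pi^-1 * _)%g.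
pose X u := x (val (be u)) * phi (tnth b (be u)).
pose Ca u := phi (tnth c ((Pi^-1)%g u)); pose Aa u := phi (tnth (emb a) u).
(* Relabel along [be], rotate twice so that each letter of [a] closes its block, then
   relabel along [s]. *)
rewrite /= (eval_trmon HR) /pcomp (cycles_tr_relabel trC trZ _ (h := be) (s1 := s)); first last.
- by move=> y; rewrite inE; apply/esym/negbF/codomP; exists ((be^-1)%g y); rewrite permKV.
- by move=> u; rewrite /s /sandwich_perm /= !invMg !permM !permK permKV.
- exact: perm_inj.
rewrite (eq_cycles_tr _ _ (g := fun u => X u * (Aa u * Ca u))); last first.
  by move=> u; rewrite /= !tnth_mktuple !(trace_alg_phiM HR) !invMg !permM !permK !mulrA.
rewrite (cycles_tr_rotate trC) (eq_cycles_tr _ _ (g := fun u => Aa u * (Ca u * X (s u)))).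
  rewrite (cycles_tr_rotate trC) [LHS](cycles_tr_conj trC trZ); apply: eq_cycles_tr => t.
  by rewrite /Aa /Ca permKV /s /sandwich_perm /= !invMg !permM !invgK permK /X !mulrA.
by move=> u; rewrite mulrA.
Qed.

Lemma trmon_sandwich (g h : wmon A m) :
  exists p (zs : nat -> term A) (theta : 'S_k), pure p /\
  forall (R : algType F) (phi : A -> R) (tr : R -> R), is_trace_alg phi tr ->
  forall x (e : wmon A k),
  eval phi tr x (trmon (wmon_mul (wmon_mul g (wmon_emb n e)) h)) =
  eval phi tr x p * eval phi tr x (subst zs (trmon (wmon_mul e (wperm A theta)))).
Proof.
have [|p [th [z' [pp Hp]]]] :=
  @contractible_subset_extras F A k n set0 (sandwich_perm g h) (sandwich_var g h) (sub0set _).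
  by move=> d; rewrite inE.
exists p, (fun j => if insub j is Some i then z' i else TVar A j), (th^-1)%g.
split=> // R phi tr HR x [a pi].
rewrite (eval_trmon_sandwich _ _ HR) Hp // eval_subst (eval_trmon HR) /pcomp invMg invgK.
by congr (_ * _); apply: eq_cycles_tr => j /=; rewrite valK !tnth_mktuple mulr1.
Qed.

End Sandwich.

Section Consequences.
Variables (F : fieldType) (A : algType F).
Implicit Types (G : term A -> Prop) (t : term A).

Definition denotes t (E : forall R : algType F, (A -> R) -> (R -> R) -> (nat -> R) -> R) :=
  forall (R : algType F) (phi : A -> R) (tr : R -> R), is_trace_alg phi tr ->
  forall x, eval phi tr x t = E R phi tr x.

Lemma consequence_sum G (I : eqType) (r : seq I)
    (E : I -> forall R : algType F, (A -> R) -> (R -> R) -> (nat -> R) -> R) :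
  consequence G (tzero A) ->
  (forall i, i \in r -> exists2 t, consequence G t & denotes t (E i)) ->
  exists2 t, consequence G t &
    denotes t (fun R phi tr x => \sum_(i <- r) E i R phi tr x).
Proof.
move=> G0; elim: r => [|i r IH] Er.
  by exists (tzero A) => // R phi tr HR x; rewrite big_nil /= scale0r.
have [t1 c1 d1] := Er i (mem_head i r).
have [|t2 c2 d2] := IH; first by move=> j jr; apply: Er; rewrite in_cons jr orbT.
by exists (TAdd t1 t2); [apply: cq_add | move=> R phi tr HR x; rewrite big_cons /= d1 // d2].
Qed.

Lemma consequence_identity G (R : algType F) (phi : A -> R) (tr : R -> R) t :
  is_trace_alg phi tr -> (forall t', G t' -> is_identity phi tr t') ->
  consequence G t -> is_identity phi tr t.
Proof.
move=> HR HG.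
elim=> {t} [t /HG //|sb t _ IH|t1 t2 _ IH1 _ IH2|c t _ IH|p t _ _ IH|t t' _ IH E] x /=.
- by rewrite eval_subst IH.
- by rewrite IH1 IH2 addr0.
- by rewrite IH scaler0.
- by rewrite IH mulr0.
- by rewrite -(E _ _ _ HR) IH.
Qed.

Lemma consequence_trw_cat G k (u v : wel A k) :
  consequence G (trw u) -> consequence G (trw v) -> consequence G (trw (u ++ v)).
Proof.
move=> cu cv; apply: cq_equiv (cq_add cu cv) _ => R phi tr HR x.
by rewrite /= !eval_trw /eval_wel big_cat.
Qed.

Variables (k : nat) (W : wel A k -> Prop).
Local Notation G := (fun t => exists2 w, W w & t = trw w).

Lemma consequence_trw_sandwich n (v v' : wel A (k + n)) (w : wel A k) :
  (forall theta, W (wel_mul w [:: (1, wperm A theta)])) -> consequence G (tzero A) ->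
  consequence G (trw (wel_mul (wel_mul v (wel_emb n w)) v')).
Proof.
move=> Wperm G0.
suff [t ct dt] : exists2 t, consequence G t & denotes t (fun R phi tr x =>
    \sum_(c <- v) \sum_(d <- v') \sum_(e <- w) (c.1 * e.1 * d.1) *:
      eval phi tr x (trmon (wmon_mul (wmon_mul c.2 (wmon_emb n e.2)) d.2))).
  apply: cq_equiv ct _ => R phi tr HR x; rewrite dt // eval_trw eval_wel_mul.
  rewrite big_allpairs_dep; apply: eq_bigr => c _; rewrite big_map exchange_big.
  by apply: eq_bigr => d _; apply: eq_bigr => e _.
apply: consequence_sum => // c _; apply: consequence_sum => // d _.
have [p [zs [th [pp Hp]]]] := trmon_sandwich c.2 d.2.
exists (TScale (c.1 * d.1) (TMul p (subst zs (trw (wel_mul w [:: (1, wperm A th)]))))).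
  apply/cq_scale/cq_mul => //; apply/cq_subst/cq_gen.
  by exists (wel_mul w [:: (1, wperm A th)]); first exact: Wperm.
move=> R phi tr HR x /=; rewrite eval_subst eval_trw eval_wel_mul mulr_sumr scaler_sumr.
apply: eq_bigr => e _; rewrite big_cons big_nil addr0 /= mulr1 Hp // eval_subst.
by rewrite -scalerAr scalerA mulrAC.
Qed.

End Consequences.

Theorem lemma5p7 (F : fieldType) (A : algType F)
  (charF0 : [pchar F] =i pred0) (ssA : semisimple_alg A)
  (R : algType F) (phi : A -> R) (tr : R -> R) (HR : is_trace_alg phi tr)
  (k : nat)
  (Wk := fun w : wel A k => is_identity phi tr (trw w))
  (Wk_ideal : forall v w : wel A k, Wk w -> Wk (wel_mul v w) /\ Wk (wel_mul w v))
  (n : nat) (s : seq (wel A (k + n) * wel A k * wel A (k + n))) :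
  (forall x, x \in s -> Wk x.1.2) ->
  let u := flatten [seq wel_mul (wel_mul x.1.1 (wel_emb n x.1.2)) x.2 | x <- s] in
  consequence (fun t => exists2 w, Wk w & t = trw w) (trw u)
  /\ is_identity phi tr (trw u).
Proof.
move=> Ws u; set G := fun t => _.
have G0 : consequence G (tzero A) by apply: cq_gen; exists [::] => // x; rewrite /= scale0r.
have cu : consequence G (trw u).
  rewrite /u {u}; elim: s Ws => [|y s IH] Ws //=.
  apply: consequence_trw_cat; last by apply: IH => z zs; apply: Ws; rewrite in_cons zs orbT.
  have Wy th : Wk (wel_mul y.1.2 [:: (1, wperm A th)]).
    exact: (Wk_ideal _ _ (Ws y (mem_head y s))).2.
  exact: consequence_trw_sandwich Wy G0.
split=> //; apply: consequence_identity HR _ cu => _ [w Ww ->]; exact: Ww.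
Qed.
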